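(* Let $n\ge1$. A valid configuration in $\Omega'_n$ contains no tile from the set $A_n\cup\hat A_n$.
   Context: $V_n=\{(v_0,v_1,v_2)\in\mathbb{Z}^3: 0\le v_0\le v_1\le 1,\ v_1\le v_2\le n+1\}$, elements written as words $v_0v_1v_2$. A Wang tile is $t=(a,b,c,d)$ with $\mathrm{RIGHT}(t)=a$, $\mathrm{TOP}(t)=b$, $\mathrm{LEFT}(t)=c$, $\mathrm{BOTTOM}(t)=d$; $\hat t=(b,a,d,c)$, $\hat S=\{\hat t:t\in S\}$. Define (as (right, top, left, bottom)): $W_n=\{(11(i+1),11(j+1),11i,11j):1\le i,j\le n\}$; $B'_n=\{(00(i+1),111,00i,11n):0\le i\le n\}$; $G_n=\{(01(i+1),111,00i,11(n+1)):0\le i\le n\}$; $Y_n=\{(01(i+1),112,01i,11(n+1)):1\le i\le n\}$; $A_n=\{(00(i+1),112,01i,11n):1\le i\le n\}$ (antigreen tiles); $J'_n=\{((0,k,l),(0,r,s),(0,s,r+n),(0,l,k+n)):(k,l),(r,s)\in\{(0,0),(0,1),(1,1)\}\}$. $\mathcal T'_n=W_n\cup B'_n\cup G_n\cup Y_n\cup A_n\cup\hat B'_n\cup\hat G_n\cup\hat Y_n\cup\hat A_n\cup J'_n$. $\Omega'_n$ is the set of configurations $c:\mathbb Z^2\to\mathcal T'_n$ with $\mathrm{RIGHT}(c(\mathbf m))=\mathrm{LEFT}(c(\mathbf m+\mathbf e_1))$ and $\mathrm{TOP}(c(\mathbf m))=\mathrm{BOTTOM}(c(\mathbf m+\mathbf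 e_2))$ for all $\mathbf m$. *)

From Stdlib Require Import ZArith.
Open Scope Z_scope.

Definition vert := (Z * Z * Z)%type.

(* Wang tile t = (a,b,c,d) with RIGHT t = a, TOP t = b, LEFT t = c, BOTTOM t = d. *)
Record tile := Tile { RIGHT : vert; TOP : vert; LEFT : vert; BOTTOM : vert }.

Definition hat (t : tile) : tile := Tile (TOP t) (RIGHT t) (BOTTOM t) (LEFT t).

Definition tileset := tile -> Prop.

Definition hatS (S : tileset) : tileset := fun t => exists u, S u /\ t = hat u.

Definition W (n : Z) : tileset := fun t =>
  exists i j, 1 <= i <= n /\ 1 <= j <= n /\
    t = Tile (1,1,i+1) (1,1,j+1) (1,1,i) (1,1,j).

Definition B' (n : Z) : tileset := fun t =>
  exists i, 0 <= i <= n /\ t = Tile (0,0,i+1) (1,1,1) (0,0,i) (1,1,n).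

Definition G (n : Z) : tileset := fun t =>
  exists i, 0 <= i <= n /\ t = Tile (0,1,i+1) (1,1,1) (0,0,i) (1,1,n+1).

Definition Y (n : Z) : tileset := fun t =>
  exists i, 1 <= i <= n /\ t = Tile (0,1,i+1) (1,1,2) (0,1,i) (1,1,n+1).

Definition A (n : Z) : tileset := fun t =>
  exists i, 1 <= i <= n /\ t = Tile (0,0,i+1) (1,1,2) (0,1,i) (1,1,n).

Definition Jpair (k l : Z) : Prop :=
  (k = 0 /\ l = 0) \/ (k = 0 /\ l = 1) \/ (k = 1 /\ l = 1).

Definition J' (n : Z) : tileset := fun t =>
  exists k l r s, Jpair k l /\ Jpair r s /\
    t = Tile (0,k,l) (0,r,s) (0,s,r+n) (0,l,k+n).

Definition T' (n : Z) : tileset := fun t =>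
  W n t \/ B' n t \/ G n t \/ Y n t \/ A n t \/
  hatS (B' n) t \/ hatS (G n) t \/ hatS (Y n) t \/ hatS (A n) t \/ J' n t.

Definition valid_config (n : Z) (c : Z * Z -> tile) : Prop :=
  (forall m, T' n (c m)) /\
  (forall x y, RIGHT (c (x, y)) = LEFT (c (x + 1, y))) /\
  (forall x y, TOP (c (x, y)) = BOTTOM (c (x, y + 1))).

(* Every tile copies the first coordinate v0 of its left label to its right label and of its
   bottom label to its top label, so each row and each column of a configuration has a kind in
   {0,1}.  Across a row of kind 1 the third coordinate v2 of the vertical labels goes up by one,
   whatever the column, and in a row of kind 0 the top label has v2 in {0,1} above a column of
   kind 0 and in {1,2} above a column of kind 1.  Since v2 >= 0, below every tile there is a row
   of kind 0, and the difference of the v2 of the vertical labels in two columns is the same at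
   a tile and at that row.  An antigreen tile at (x,y) has bottom 11n, while the tile to its left
   has bottom with v2 = n+1; at the row of kind 0 below, the gap 1 forces column x-1 to have
   kind 1, the tile of column x to be blue or green and the one of column x-1 to be antigreen
   again.  Hence all columns to the left of x have kind 1, so v2 of the horizontal labels of row
   y decreases by one at each step to the left and eventually becomes negative.  The hatted
   tiles are handled by transposing the configuration. *)
From Stdlib Require Import ZArith Lia.
Open Scope Z_scope.

Definition v0 (v : vert) : Z := fst (fst v).
Definition v1 (v : vert) : Z := snd (fst v).
Definition v2 (v : vert) : Z := snd v.

Lemma Z_succ_invariant_const {X : Type} (f : Z -> X) :
  (forall y, f (y + 1) = f y) -> forall y y', f y = f y'.
Proof.
  intros Hf.
  assert (Hf0 : forall y, f y = f 0).
  { intros y; induction y as [|y IH|y IH] using Z.peano_ind; [reflexivity| |].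
    - rewrite <- Z.add_1_r, Hf; exact IH.
    - rewrite <- IH, <- (Hf (Z.pred y)), Z.add_1_r, Z.succ_pred; reflexivity. }
  intros y y'; rewrite (Hf0 y), (Hf0 y'); reflexivity.
Qed.

Ltac destruct_tile H :=
  unfold T', W, B', G, Y, A, hatS, J', Jpair in H;
  decompose [and or ex] H; clear H; subst;
  unfold hat, v0, v1, v2 in *; cbn [fst snd RIGHT TOP LEFT BOTTOM] in *; try lia.

Section Tiles.
Variable n : Z.
Hypothesis n_nonneg : 0 <= n.
Variable t : tile.
Hypothesis Ht : T' n t.

Lemma tile_v0_TOP : v0 (TOP t) = v0 (BOTTOM t).
Proof. destruct_tile Ht. Qed.

Lemma tile_v0_RIGHT : v0 (RIGHT t) = v0 (LEFT t).
Proof. destruct_tile Ht. Qed.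

Lemma tile_v0_LEFT_cases : v0 (LEFT t) = 0 \/ v0 (LEFT t) = 1.
Proof. destruct_tile Ht. Qed.

Lemma tile_v0_BOTTOM_le1 : v0 (BOTTOM t) <= 1.
Proof. destruct_tile Ht. Qed.

Lemma tile_v2_LEFT_nonneg : 0 <= v2 (LEFT t).
Proof. destruct_tile Ht. Qed.

Lemma tile_v2_BOTTOM_nonneg : 0 <= v2 (BOTTOM t).
Proof. destruct_tile Ht. Qed.

Lemma tile_v2_TOP_succ : v0 (LEFT t) = 1 -> v2 (TOP t) = v2 (BOTTOM t) + 1.
Proof. destruct_tile Ht. Qed.

Lemma tile_v2_RIGHT_succ : v0 (BOTTOM t) = 1 -> v2 (RIGHT t) = v2 (LEFT t) + 1.
Proof. destruct_tile Ht. Qed.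

Lemma tile_v2_TOP_bounds :
  v0 (LEFT t) = 0 -> v0 (BOTTOM t) <= v2 (TOP t) <= v0 (BOTTOM t) + 1.
Proof. destruct_tile Ht. Qed.

Lemma tile_v2_BOTTOM_of_v1_RIGHT :
  v0 (LEFT t) = 0 -> v1 (RIGHT t) = 1 -> v2 (BOTTOM t) = n + 1.
Proof. destruct_tile Ht. Qed.

Lemma tile_v1_LEFT_of_v2_TOP :
  v0 (LEFT t) = 0 -> v0 (BOTTOM t) = 1 -> v2 (TOP t) = 1 -> v1 (LEFT t) = 0.
Proof. destruct_tile Ht. Qed.

Lemma tile_antigreen_of_v2_TOP :
  v0 (LEFT t) = 0 -> v0 (BOTTOM t) = 1 -> v2 (TOP t) = 2 -> v1 (RIGHT t) = 0 -> A n t.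
Proof.
  destruct_tile Ht.
  match goal with i : Z |- _ => exists i; split; [lia | f_equal; f_equal; lia] end.
Qed.

End Tiles.

Lemma antigreen_labels n t :
  A n t -> v0 (LEFT t) = 0 /\ v1 (LEFT t) = 1 /\ v0 (BOTTOM t) = 1 /\ v2 (BOTTOM t) = n.
Proof. intros (i & _ & ->); cbn; repeat split. Qed.

Lemma hat_involutive t : hat (hat t) = t.
Proof. destruct t; reflexivity. Qed.

Lemma T'_hat n t : T' n t -> T' n (hat t).
Proof.
  intros [Ht|[Ht|[Ht|[Ht|[Ht|[Ht|[Ht|[Ht|[Ht|Ht]]]]]]]]].
  - destruct Ht as (i & j & Hi & Hj & ->); left; exists j, i; auto.
  - do 5 right; left; exists t; auto.
  - do 6 right; left; exists t; auto.
  - do 7 right; left; exists t; auto.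
  - do 8 right; left; exists t; auto.
  - destruct Ht as (u & Hu & ->); rewrite hat_involutive; right; left; exact Hu.
  - destruct Ht as (u & Hu & ->); rewrite hat_involutive; do 2 right; left; exact Hu.
  - destruct Ht as (u & Hu & ->); rewrite hat_involutive; do 3 right; left; exact Hu.
  - destruct Ht as (u & Hu & ->); rewrite hat_involutive; do 4 right; left; exact Hu.
  - destruct Ht as (k & l & r & s & Hkl & Hrs & ->); do 9 right; exists r, s, k, l; auto.
Qed.

Lemma valid_config_transpose n c :
  valid_config n c -> valid_config n (fun m => hat (c (snd m, fst m))).
Proof.
  intros (Hc & Hh & Hv); split; [|split]; cbn.
  - intros m; apply T'_hat, Hc.
  - intros x y; apply Hv.
  - intros x y; apply Hh.
Qed.

Section Config.
Variable n : Z.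
Hypothesis n_nonneg : 0 <= n.
Variable c : Z * Z -> tile.
Hypothesis Hc : valid_config n c.

Let Hc_tile m : T' n (c m) := proj1 Hc m.

Lemma RIGHT_pred x y : RIGHT (c (x - 1, y)) = LEFT (c (x, y)).
Proof. rewrite (proj1 (proj2 Hc)), Z.sub_add; reflexivity. Qed.

Lemma TOP_pred x y : TOP (c (x, y - 1)) = BOTTOM (c (x, y)).
Proof. rewrite (proj2 (proj2 Hc)), Z.sub_add; reflexivity. Qed.

Lemma v0_LEFT_row x x' y : v0 (LEFT (c (x, y))) = v0 (LEFT (c (x', y))).
Proof.
  apply (Z_succ_invariant_const (fun x => v0 (LEFT (c (x, y))))); intros z.
  rewrite <- (RIGHT_pred (z + 1)), Z.add_simpl_r; apply (tile_v0_RIGHT n), Hc_tile.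
Qed.

Lemma v0_BOTTOM_column x y y' : v0 (BOTTOM (c (x, y))) = v0 (BOTTOM (c (x, y'))).
Proof.
  apply (Z_succ_invariant_const (fun y => v0 (BOTTOM (c (x, y))))); intros z.
  rewrite <- (TOP_pred x (z + 1)), Z.add_simpl_r; apply (tile_v0_TOP n), Hc_tile.
Qed.

Lemma v2_gap_at_row_of_kind0 x1 x2 y : exists y0,
  v0 (LEFT (c (x1, y0))) = 0 /\
  v2 (TOP (c (x1, y0))) - v2 (TOP (c (x2, y0)))
    = v2 (BOTTOM (c (x1, y))) - v2 (BOTTOM (c (x2, y))).
Proof.
  remember (v2 (BOTTOM (c (x1, y)))) as L eqn:HL.
  assert (HL0 : 0 <= L) by (subst L; apply (tile_v2_BOTTOM_nonneg n n_nonneg), Hc_tile).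
  revert y HL; pattern L; apply Z_lt_induction; [clear L HL0; intros L IH y HL | exact HL0].
  destruct (tile_v0_LEFT_cases n _ (Hc_tile (x1, y - 1))) as [Hkind0|Hkind1].
  - exists (y - 1); rewrite !TOP_pred, <- HL; auto.
  - assert (Hkind2 : v0 (LEFT (c (x2, y - 1))) = 1)
      by (rewrite (v0_LEFT_row _ x1); exact Hkind1).
    pose proof (tile_v2_TOP_succ n _ (Hc_tile (x1, y - 1)) Hkind1) as Hx1.
    pose proof (tile_v2_TOP_succ n _ (Hc_tile (x2, y - 1)) Hkind2) as Hx2.
    rewrite !TOP_pred in Hx1, Hx2.
    assert (0 <= v2 (BOTTOM (c (x1, y - 1))))
      by apply (tile_v2_BOTTOM_nonneg n n_nonneg), Hc_tile.
    destruct (IH (v2 (BOTTOM (c (x1, y - 1)))) ltac:(lia) (y - 1) eq_refl) as (y0 & Hy0 & Hgap).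
    exists y0; split; [exact Hy0 | lia].
Qed.

Lemma antigreen_left x y : A n (c (x, y)) -> exists y0, A n (c (x - 1, y0)).
Proof.
  intros HA; destruct (antigreen_labels _ _ HA) as (HL0 & HL1 & HB0 & HB2).
  assert (Hleft : v2 (BOTTOM (c (x - 1, y))) = n + 1).
  { apply (tile_v2_BOTTOM_of_v1_RIGHT n _ (Hc_tile _)).
    - rewrite (v0_LEFT_row _ x); exact HL0.
    - rewrite RIGHT_pred; exact HL1. }
  destruct (v2_gap_at_row_of_kind0 (x - 1) x y) as (y0 & Hrow & Hgap).
  rewrite Hleft, HB2 in Hgap.
  assert (Hrow' : v0 (LEFT (c (x, y0))) = 0) by (rewrite (v0_LEFT_row _ (x - 1)); exact Hrow).
  assert (Hcol : v0 (BOTTOM (c (x, y0))) = 1) by (rewrite (v0_BOTTOM_column _ _ y); exact HB0).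
  pose proof (tile_v2_TOP_bounds n _ (Hc_tile (x, y0)) Hrow') as Hx.
  pose proof (tile_v2_TOP_bounds n _ (Hc_tile (x - 1, y0)) Hrow) as Hx1.
  pose proof (tile_v0_BOTTOM_le1 n _ (Hc_tile (x - 1, y0))) as Hcol1.
  exists y0; apply (tile_antigreen_of_v2_TOP n _ (Hc_tile _) Hrow); try lia.
  rewrite RIGHT_pred; apply (tile_v1_LEFT_of_v2_TOP n _ (Hc_tile _)); lia.
Qed.

Lemma antigreen_columns_left x y : A n (c (x, y)) ->
  forall d, 0 <= d -> v0 (BOTTOM (c (x - d, y))) = 1.
Proof.
  intros HA.
  assert (Hleft : forall d, 0 <= d -> exists y', A n (c (x - d, y'))).
  { apply natlike_ind; [| intros d Hd (y' & Hy')].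
    - exists y; rewrite Z.sub_0_r; exact HA.
    - destruct (antigreen_left _ _ Hy') as (y0 & Hy0).
      exists y0; rewrite <- Z.add_1_r, Z.sub_add_distr; exact Hy0. }
  intros d Hd; destruct (Hleft d Hd) as (y' & Hy').
  rewrite (v0_BOTTOM_column _ _ y'); apply (antigreen_labels _ _ Hy').
Qed.

Lemma no_antigreen m : ~ A n (c m).
Proof.
  destruct m as [x y]; intros HA.
  assert (Hdesc : forall d, 0 <= d -> v2 (LEFT (c (x - d, y))) = v2 (LEFT (c (x, y))) - d).
  { apply natlike_ind; [| intros d Hd IH].
    - rewrite Z.sub_0_r; lia.
    - rewrite <- Z.add_1_r, Z.sub_add_distr.
      pose proof (antigreen_columns_left _ _ HA (d + 1) ltac:(lia)) as Hcol.
      rewrite Z.sub_add_distr in Hcol.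
      pose proof (tile_v2_RIGHT_succ n _ (Hc_tile _) Hcol) as Hstep.
      rewrite RIGHT_pred in Hstep; lia. }
  set (L := v2 (LEFT (c (x, y)))).
  assert (HL : 0 <= L) by apply (tile_v2_LEFT_nonneg n n_nonneg), Hc_tile.
  pose proof (tile_v2_LEFT_nonneg n n_nonneg _ (Hc_tile (x - (L + 1), y))) as Hneg.
  rewrite Hdesc in Hneg; lia.
Qed.

End Config.

Theorem lemma7p2 (n : Z) (hn : 1 <= n) (c : Z * Z -> tile) :
  valid_config n c ->
  forall m : Z * Z, ~ A n (c m) /\ ~ hatS (A n) (c m).
Proof.
  intros Hc m.
  assert (n_nonneg : 0 <= n) by lia.
  split; [exact (no_antigreen n n_nonneg c Hc m)|].
  intros (u & Hu & Eu).
  destruct m as [x y].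
  apply (no_antigreen n n_nonneg _ (valid_config_transpose n c Hc) (y, x)); cbn.
  rewrite Eu, hat_involutive; exact Hu.
Qed.
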